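(* Let $\mathbb{X}$ be a reverse differential restriction category with reverse derivative $R$. For each map $f:A\to B$ define $$D[f]:=(\iota_0\times 1_A)\,R[R[f]]\,\pi_1 \;:\; A\times A\to B,$$ where $\iota_0=\langle 1_A,0\rangle:A\to A\times B$, so that $\iota_0\times 1_A:A\times A\to (A\times B)\times A$ and $\pi_1:A\times B\to B$. Then $D$ satisfies the axioms [DR.1]–[DR.9] below, i.e. $(\mathbb{X},D)$ is a differential restriction category.
   Context: Composition is written in diagrammatic order: $fg$ means ''first $f$, then $g$''. A restriction category is a category with an operation sending each $f:A\to B$ to a map $\bar f:A\to A$ such that $\bar f f=f$, $\bar f\bar g=\bar g\bar f$ (for $f,g$ with common domain), $\overline{\bar f g}=\bar f\bar g$, and $f\bar g=\overline{fg}\,f$. A map $f$ is total if $\bar f=1$. For parallel maps, $f\le g$ means $\bar f g=f$; a nowhere-defined map $\emptyset$ is a least element for $\le$. The category has restriction products if: - there is an object $1$ with a total map $!_A:A\to 1$ for each $A$ such that every $f:A\to 1$ equals $\bar f\,!_A$; - for all $A,B$ there is an object $A\times B$ with total maps $\pi_0,\pi_1$ such that for all $f:C\to A$, $g:C\to B$ there is a unique $\langle f,g\rangle:C\to A\times B$ with $\langle f,g\rangle\pi_0=\bar g f$ and $\langle f,g\rangle\pi_1=\bar f g$. Write $f\times g=\langle \pi_0 f,\pi_1 g\rangle$. A Cartesian left additive restriction category is a restriction category with restriction products in which every hom-set is a commutative monoid $(+,0)$ such that: - $\overline{f+g}=\bar f\bar g$ and $\bar 0=1$; - $x(f+g)=xf+xg$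 and $x0=\bar x 0$; - $(f+g)\pi_i=f\pi_i+g\pi_i$ and $0\pi_i=0$. Write $\iota_0=\langle 1,0\rangle:A\to A\times B$ and $\iota_1=\langle 0,1\rangle:B\to A\times B$. A reverse differential restriction category (RDRC) is a Cartesian left additive restriction category with an operation sending each $f:A\to B$ to $R[f]:A\times B\to A$ such that: - [RD.1] $R[f+g]=R[f]+R[g]$ and $R[0]=0$. - [RD.2] $\langle a,b+c\rangle R[f]=\langle a,b\rangle R[f]+\langle a,c\rangle R[f]$ and $\langle a,0\rangle R[f]=\overline{af}\,0$ for all suitable $a,b,c$. - [RD.3] $R[\pi_j]=\pi_1\iota_j$. - [RD.4] $R[\langle f,g\rangle]=(1\times\pi_0)R[f]+(1\times\pi_1)R[g]$. - [RD.5] $R[fg]=\langle \pi_0,\langle\pi_0 f,\pi_1\rangle R[g]\rangle R[f]$. - [RD.6] $\langle 1\times\pi_0,\,0\times\pi_1\rangle(\iota_0\times 1)R[R[R[f]]]\pi_1=(1\times\pi_1)R[f]$. - [RD.7] With $g:=(\iota_0\times 1)R[R[f]]\pi_1$, one has $(\iota_0\times1)R[R[g]]\pi_1=\mathrm{ex}\,(\iota_0\times 1)R[R[g]]\pi_1$, where $\mathrm{ex}=\langle\pi_0\times\pi_0,\pi_1\times\pi_1\rangle:(A\times A)\times(A\times A)\to(A\times A)\times(A\times A)$. - [RD.8] $\overline{R[f]}=\bar f\times 1$. - [RD.9] $R[\bar f]=(\bar f\times 1)\pi_1$. A differential restriction category is a Cartesian left additive restriction category with an operation sending each $f:A\to B$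 to $D[f]:A\times A\to B$ (first argument the point, second the direction) such that, for all suitable maps $a,u,v,w$: - [DR.1] $D[0]=0$ and $D[f+g]=D[f]+D[g]$. - [DR.2] $\langle a,v+w\rangle D[f]=\langle a,v\rangle D[f]+\langle a,w\rangle D[f]$ and $\langle a,0\rangle D[f]=\overline{af}\,0$. - [DR.3] $D[1]=\pi_1$, $D[\pi_0]=\pi_1\pi_0$, $D[\pi_1]=\pi_1\pi_1$. - [DR.4] $D[\langle f,g\rangle]=\langle D[f],D[g]\rangle$. - [DR.5] $D[fg]=\langle \pi_0 f,D[f]\rangle D[g]$. - [DR.6] $\langle\langle a,v\rangle,\langle 0,w\rangle\rangle D[D[f]]=\bar v\,\langle a,w\rangle D[f]$. - [DR.7] $\langle\langle a,v\rangle,\langle u,0\rangle\rangle D[D[f]]=\langle\langle a,u\rangle,\langle v,0\rangle\rangle D[D[f]]$. - [DR.8] $\overline{D[f]}=\bar f\times 1$. - [DR.9] $D[\bar f]=(\bar f\times 1)\pi_1$. *)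

Set Implicit Arguments.
Unset Strict Implicit.

(* The data of a Cartesian left additive restriction category.
   Composition is written in DIAGRAMMATIC order: [comp f g] = "first f, then g". *)
Record ClData : Type := {
  Ob : Type;
  hom : Ob -> Ob -> Type;
  idm : forall A : Ob, hom A A;
  comp : forall A B C : Ob, hom A B -> hom B C -> hom A C;
  rst : forall A B : Ob, hom A B -> hom A A;
  term : Ob;
  bang : forall A : Ob, hom A term;
  prod : Ob -> Ob -> Ob;
  pi0 : forall A B : Ob, hom (prod A B) A;
  pi1 : forall A B : Ob, hom (prod A B) B;
  pair : forall C A B : Ob, hom C A -> hom C B -> hom C (prod A B);
  add : forall A B : Ob, hom A B -> hom A B -> hom A B;
  zero : forall A B : Ob, hom A B
}.

Arguments hom {c} _ _.
Arguments idm {c} A.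
Arguments comp {c A B C} _ _.
Arguments rst {c A B} _.
Arguments term {c}.
Arguments bang {c} A.
Arguments prod {c} _ _.
Arguments pi0 {c A B}.
Arguments pi1 {c A B}.
Arguments pair {c C A B} _ _.
Arguments add {c A B} _ _.
Arguments zero {c A B}.

Declare Scope cat_scope.
Delimit Scope cat_scope with cat.
Notation "f ';;' g" := (comp f g) (at level 40, left associativity) : cat_scope.
Notation "'bar' f" := (rst f) (at level 10) : cat_scope.
Notation "f '+m' g" := (add f g) (at level 50, left associativity) : cat_scope.
Open Scope cat_scope.

Section Derived.
Context {X : ClData}.

Definition total {A B : Ob X} (f : hom A B) : Prop := rst f = idm A.

Definition times {A B A' B' : Ob X} (f : hom A A') (g : hom B B')
  : hom (prod A B) (prod A' B') := pair (pi0 ;; f) (pi1 ;; g).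

Definition iota0 (A B : Ob X) : hom A (prod A B) := pair (idm A) (@zero X A B).
Definition iota1 (A B : Ob X) : hom B (prod A B) := pair (@zero X B A) (idm B).

End Derived.

Record is_CLARC (X : ClData) : Prop := {
  comp_assoc : forall (A B C D : Ob X) (f : hom A B) (g : hom B C) (h : hom C D),
      (f ;; g) ;; h = f ;; (g ;; h);
  comp_id_l : forall (A B : Ob X) (f : hom A B), idm A ;; f = f;
  comp_id_r : forall (A B : Ob X) (f : hom A B), f ;; idm B = f;
  R1 : forall (A B : Ob X) (f : hom A B), bar f ;; f = f;
  R2 : forall (A B C : Ob X) (f : hom A B) (g : hom A C), bar f ;; bar g = bar g ;; bar f;
  R3 : forall (A B C : Ob X) (f : hom A B) (g : hom A C), bar (bar f ;; g) = bar f ;; bar g;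
  R4 : forall (A B C : Ob X) (f : hom A B) (g : hom B C), f ;; bar g = bar (f ;; g) ;; f;
  bang_total : forall A : Ob X, total (bang A);
  term_univ : forall (A : Ob X) (f : hom A term), f = bar f ;; bang A;
  pi0_total : forall A B : Ob X, total (@pi0 X A B);
  pi1_total : forall A B : Ob X, total (@pi1 X A B);
  pair_pi0 : forall (C A B : Ob X) (f : hom C A) (g : hom C B), pair f g ;; pi0 = bar g ;; f;
  pair_pi1 : forall (C A B : Ob X) (f : hom C A) (g : hom C B), pair f g ;; pi1 = bar f ;; g;
  pair_unique : forall (C A B : Ob X) (f : hom C A) (g : hom C B) (h : hom C (prod A B)),
      h ;; pi0 = bar g ;; f -> h ;; pi1 = bar f ;; g -> h = pair f g;
  add_assoc : forall (A B : Ob X) (f g h : hom A B), (f +m g) +m h = f +m (g +m h);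
  add_comm : forall (A B : Ob X) (f g : hom A B), f +m g = g +m f;
  add_zero : forall (A B : Ob X) (f : hom A B), f +m zero = f;
  rst_add : forall (A B : Ob X) (f g : hom A B), bar (f +m g) = bar f ;; bar g;
  rst_zero : forall A B : Ob X, bar (@zero X A B) = idm A;
  comp_add : forall (C A B : Ob X) (x : hom C A) (f g : hom A B), x ;; (f +m g) = (x ;; f) +m (x ;; g);
  comp_zero : forall (C A B : Ob X) (x : hom C A), x ;; (@zero X A B) = bar x ;; zero;
  add_pi0 : forall (C A B : Ob X) (f g : hom C (prod A B)), (f +m g) ;; pi0 = (f ;; pi0) +m (g ;; pi0);
  add_pi1 : forall (C A B : Ob X) (f g : hom C (prod A B)), (f +m g) ;; pi1 = (f ;; pi1) +m (g ;; pi1);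
  zero_pi0 : forall (C A B : Ob X), (@zero X C (prod A B)) ;; pi0 = zero;
  zero_pi1 : forall (C A B : Ob X), (@zero X C (prod A B)) ;; pi1 = zero
}.

Definition RevOp (X : ClData) : Type :=
  forall (A B : Ob X), hom A B -> hom (prod A B) A.

Definition DiffOp (X : ClData) : Type :=
  forall (A B : Ob X), hom A B -> hom (prod A A) B.

Record RD_axioms (X : ClData) (R : RevOp X) : Prop := {
  RD1_add : forall (A B : Ob X) (f g : hom A B), R _ _ (f +m g) = R _ _ f +m R _ _ g;
  RD1_zero : forall (A B : Ob X), R _ _ (@zero X A B) = zero;
  RD2_add : forall (C A B : Ob X) (f : hom A B) (a : hom C A) (b c : hom C B),
      pair a (b +m c) ;; R _ _ f = (pair a b ;; R _ _ f) +m (pair a c ;; R _ _ f);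
  RD2_zero : forall (C A B : Ob X) (f : hom A B) (a : hom C A),
      pair a zero ;; R _ _ f = bar (a ;; f) ;; (@zero X C A);
  RD3_0 : forall (A B : Ob X), R _ _ (@pi0 X A B) = pi1 ;; iota0 A B;
  RD3_1 : forall (A B : Ob X), R _ _ (@pi1 X A B) = pi1 ;; iota1 A B;
  RD4 : forall (C A B : Ob X) (f : hom C A) (g : hom C B),
      R _ _ (pair f g) = (times (idm C) pi0 ;; R _ _ f) +m (times (idm C) pi1 ;; R _ _ g);
  RD5 : forall (A B C : Ob X) (f : hom A B) (g : hom B C),
      R _ _ (f ;; g) = pair pi0 (pair (pi0 ;; f) pi1 ;; R _ _ g) ;; R _ _ f;
  RD6 : forall (A B : Ob X) (f : hom A B),
      pair (times (idm A) (@pi0 X B B)) (times (@zero X A A) (@pi1 X B B))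
        ;; times (iota0 (prod A B) A) (idm (prod A B))
        ;; R _ _ (R _ _ (R _ _ f)) ;; pi1
      = times (idm A) (@pi1 X B B) ;; R _ _ f;
  RD7 : forall (A B : Ob X) (f : hom A B),
      let g := times (iota0 A B) (idm A) ;; R _ _ (R _ _ f) ;; pi1 in
      let ex := pair (times (@pi0 X A A) (@pi0 X A A)) (times (@pi1 X A A) (@pi1 X A A)) in
      times (iota0 (prod A A) B) (idm (prod A A)) ;; R _ _ (R _ _ g) ;; pi1
      = ex ;; times (iota0 (prod A A) B) (idm (prod A A)) ;; R _ _ (R _ _ g) ;; pi1;
  RD8 : forall (A B : Ob X) (f : hom A B), bar (R _ _ f) = times (bar f) (idm B);
  RD9 : forall (A B : Ob X) (f : hom A B), R _ _ (bar f) = times (bar f) (idm A) ;; pi1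
}.

Record DR_axioms (X : ClData) (D : DiffOp X) : Prop := {
  DR1_zero : forall (A B : Ob X), D _ _ (@zero X A B) = zero;
  DR1_add : forall (A B : Ob X) (f g : hom A B), D _ _ (f +m g) = D _ _ f +m D _ _ g;
  DR2_add : forall (C A B : Ob X) (f : hom A B) (a v w : hom C A),
      pair a (v +m w) ;; D _ _ f = (pair a v ;; D _ _ f) +m (pair a w ;; D _ _ f);
  DR2_zero : forall (C A B : Ob X) (f : hom A B) (a : hom C A),
      pair a zero ;; D _ _ f = bar (a ;; f) ;; (@zero X C B);
  DR3_id : forall (A : Ob X), D _ _ (idm A) = pi1;
  DR3_pi0 : forall (A B : Ob X), D _ _ (@pi0 X A B) = pi1 ;; pi0;
  DR3_pi1 : forall (A B : Ob X), D _ _ (@pi1 X A B) = pi1 ;; pi1;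
  DR4 : forall (C A B : Ob X) (f : hom C A) (g : hom C B),
      D _ _ (pair f g) = pair (D _ _ f) (D _ _ g);
  DR5 : forall (A B C : Ob X) (f : hom A B) (g : hom B C),
      D _ _ (f ;; g) = pair (pi0 ;; f) (D _ _ f) ;; D _ _ g;
  DR6 : forall (C A B : Ob X) (f : hom A B) (a v w : hom C A),
      pair (pair a v) (pair zero w) ;; D _ _ (D _ _ f) = bar v ;; pair a w ;; D _ _ f;
  DR7 : forall (C A B : Ob X) (f : hom A B) (a u v : hom C A),
      pair (pair a v) (pair u zero) ;; D _ _ (D _ _ f)
      = pair (pair a u) (pair v zero) ;; D _ _ (D _ _ f);
  DR8 : forall (A B : Ob X) (f : hom A B), bar (D _ _ f) = times (bar f) (idm A);
  DR9 : forall (A B : Ob X) (f : hom A B), D _ _ (bar f) = times (bar f) (idm A) ;; pi1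
}.

Definition is_RDRC (X : ClData) (R : RevOp X) : Prop := is_CLARC X /\ RD_axioms R.

Definition is_DRC (X : ClData) (D : DiffOp X) : Prop := is_CLARC X /\ DR_axioms D.

Definition D_of_R (X : ClData) (R : RevOp X) : DiffOp X :=
  fun (A B : Ob X) (f : hom A B) =>
    times (iota0 A B) (idm A) ;; R _ _ (R _ _ f) ;; pi1.

From Corelib Require Import ssreflect.

(* Almost every axiom [DR.i] is an equation u = w between parallel maps, and
   all of them are proved by the same principle of restriction categories:
   if u <= K, w <= K and bar u = bar w then u = w (where u <= K means
   bar u ;; K = u).  Restrictions of D[f] are computed once and for all from
   [RD.8] (bar D[f] = bar (pi0 f)), so each axiom reduces to an inequality
   u <= w, which is obtained by unfolding the [RD] axioms and discarding the
   restriction idempotents and the summands that vanish (are <= 0). *)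

Section CartesianLeftAdditive.
Variable X : ClData.
Hypothesis HX : is_CLARC X.

Lemma compA {A B C D : Ob X} (f : hom A B) (g : hom B C) (h : hom C D) :
  f ;; g ;; h = f ;; (g ;; h).
Proof. exact: (comp_assoc HX). Qed.
Lemma comp_idl {A B : Ob X} (f : hom A B) : idm A ;; f = f.
Proof. exact: (comp_id_l HX). Qed.
Lemma comp_idr {A B : Ob X} (f : hom A B) : f ;; idm B = f.
Proof. exact: (comp_id_r HX). Qed.
Lemma rstK {A B : Ob X} (f : hom A B) : bar f ;; f = f.
Proof. exact: (R1 HX). Qed.
Lemma rstC {A B C : Ob X} (f : hom A B) (g : hom A C) : bar f ;; bar g = bar g ;; bar f.
Proof. exact: (R2 HX). Qed.
Lemma rst_rstL {A B C : Ob X} (f : hom A B) (g : hom A C) : bar (bar f ;; g) = bar f ;; bar g.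
Proof. exact: (R3 HX). Qed.
Lemma comp_rstR {A B C : Ob X} (f : hom A B) (g : hom B C) : f ;; bar g = bar (f ;; g) ;; f.
Proof. exact: (R4 HX). Qed.

Lemma rst_idm (A : Ob X) : bar (idm A) = idm A.
Proof. by have := rstK (idm A); rewrite comp_idr. Qed.

Lemma rst_rst {A B : Ob X} (f : hom A B) : bar (bar f) = bar f.
Proof. by have := rst_rstL f (idm A); rewrite !comp_idr rst_idm comp_idr. Qed.

Lemma rst_compL {A B C : Ob X} (f : hom A B) (g : hom B C) :
  bar (f ;; g) ;; bar f = bar (f ;; g).
Proof. by rewrite rstC -rst_rstL -compA rstK. Qed.

Lemma rst_comp_rst {A B C : Ob X} (f : hom A B) (g : hom B C) : bar (f ;; bar g) = bar (f ;; g).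
Proof. by rewrite comp_rstR rst_rstL rst_compL. Qed.

Lemma rst_comp_total {A B C : Ob X} (f : hom A B) (g : hom B C) :
  total g -> bar (f ;; g) = bar f.
Proof. by move=> tg; rewrite -rst_comp_rst tg comp_idr. Qed.

Lemma comp_total {A B C : Ob X} (f : hom A B) (g : hom B C) :
  total f -> total g -> total (f ;; g).
Proof. by rewrite /total => tf tg; rewrite rst_comp_total. Qed.

Lemma idm_total (A : Ob X) : total (idm A).
Proof. exact: rst_idm. Qed.

Lemma pair_p0 {C A B : Ob X} (f : hom C A) (g : hom C B) : pair f g ;; pi0 = bar g ;; f.
Proof. exact: (pair_pi0 HX). Qed.
Lemma pair_p1 {C A B : Ob X} (f : hom C A) (g : hom C B) : pair f g ;; pi1 = bar f ;; g.
Proof. exact: (pair_pi1 HX). Qed.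
Lemma pi0_tot {A B : Ob X} : bar (@pi0 X A B) = idm _.
Proof. exact: (pi0_total HX). Qed.
Lemma pi1_tot {A B : Ob X} : bar (@pi1 X A B) = idm _.
Proof. exact: (pi1_total HX). Qed.
Lemma zero_tot {A B : Ob X} : bar (@zero X A B) = idm A.
Proof. exact: (rst_zero HX). Qed.
Lemma comp_zeroR {C A B : Ob X} (x : hom C A) : x ;; (@zero X A B) = bar x ;; zero.
Proof. exact: (comp_zero HX). Qed.
Lemma add0m {A B : Ob X} (f : hom A B) : zero +m f = f.
Proof. by rewrite (add_comm HX) (add_zero HX). Qed.

Lemma rst_comp_pi0 {A B C : Ob X} (f : hom C (prod A B)) : bar (f ;; pi0) = bar f.
Proof. apply: rst_comp_total; exact: pi0_tot. Qed.
Lemma rst_comp_pi1 {A B C : Ob X} (f : hom C (prod A B)) : bar (f ;; pi1) = bar f.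
Proof. apply: rst_comp_total; exact: pi1_tot. Qed.

Lemma rst_pair {C A B : Ob X} (f : hom C A) (g : hom C B) : bar (pair f g) = bar f ;; bar g.
Proof. by rewrite -rst_comp_pi0 pair_p0 rst_rstL rstC. Qed.

Lemma pair_id {A B : Ob X} : pair (@pi0 X A B) pi1 = idm _.
Proof.
  symmetry; apply: (pair_unique HX); by rewrite comp_idl ?pi0_tot ?pi1_tot comp_idl.
Qed.

Lemma pair_comp {D C A B : Ob X} (x : hom D C) (f : hom C A) (g : hom C B) :
  x ;; pair f g = pair (x ;; f) (x ;; g).
Proof.
  apply: (pair_unique HX).
  - by rewrite compA pair_p0 -compA comp_rstR compA.
  - by rewrite compA pair_p1 -compA comp_rstR compA.
Qed.

Lemma pair_rstL {E C A B : Ob X} (e : hom C E) (f : hom C A) (g : hom C B) :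
  pair (bar e ;; f) g = bar e ;; pair f g.
Proof.
  symmetry; apply: (pair_unique HX).
  - by rewrite compA pair_p0 -!compA (rstC g e).
  - by rewrite compA pair_p1 rst_rstL compA.
Qed.
Lemma pair_rstR {E C A B : Ob X} (e : hom C E) (f : hom C A) (g : hom C B) :
  pair f (bar e ;; g) = bar e ;; pair f g.
Proof.
  symmetry; apply: (pair_unique HX).
  - by rewrite compA pair_p0 rst_rstL compA.
  - by rewrite compA pair_p1 -!compA (rstC f e).
Qed.

Lemma pair_zero {C A B : Ob X} : pair (@zero X C A) (@zero X C B) = zero.
Proof.
  symmetry; apply: (pair_unique HX);
    by rewrite ?(zero_pi0 HX) ?(zero_pi1 HX) zero_tot comp_idl.
Qed.

Lemma pair_total {C A B : Ob X} (f : hom C A) (g : hom C B) :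
  total f -> total g -> total (pair f g).
Proof. by rewrite /total rst_pair => -> ->; rewrite comp_idl. Qed.

Lemma times_total {A B A' B' : Ob X} (f : hom A A') (g : hom B B') :
  total f -> total g -> total (times f g).
Proof.
  move=> tf tg; apply: pair_total; apply: comp_total => //; [exact: pi0_tot | exact: pi1_tot].
Qed.

Lemma times_rst_idm {A B E : Ob X} (e : hom A E) : times (bar e) (idm B) = bar (pi0 ;; e).
Proof. by rewrite /times comp_rstR pair_rstL comp_idr pair_id comp_idr. Qed.

Definition rle {A B : Ob X} (u K : hom A B) : Prop := bar u ;; K = u.
Local Notation "u <=r K" := (rle u K) (at level 70).

Lemma rle_refl {A B : Ob X} (u : hom A B) : u <=r u.
Proof. exact: rstK. Qed.

Lemma rle_rst {E A B : Ob X} (e : hom A E) (K : hom A B) : bar e ;; K <=r K.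
Proof. by rewrite /rle rst_rstL compA rstK. Qed.

Lemma rle_trans {A B : Ob X} {u w K : hom A B} : u <=r w -> w <=r K -> u <=r K.
Proof.
  rewrite /rle => huw hwK.
  have e : bar u ;; bar w = bar u by rewrite -rst_rstL huw.
  by rewrite -e compA hwK huw.
Qed.

Lemma rle_eq {A B : Ob X} {K : hom A B} (u w : hom A B) :
  u <=r K -> w <=r K -> bar u = bar w -> u = w.
Proof. by rewrite /rle => huK hwK e; rewrite -huK -hwK e. Qed.

Lemma rle_compL {C A B : Ob X} (x : hom C A) (u K : hom A B) : u <=r K -> x ;; u <=r x ;; K.
Proof. by rewrite /rle => huK; rewrite -compA -comp_rstR compA huK. Qed.

Lemma rle_compR {C A B : Ob X} (u K : hom C A) (g : hom A B) : u <=r K -> u ;; g <=r K ;; g.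
Proof.
  rewrite /rle => huK.
  by rewrite -(rst_compL u g) compA -(compA (bar u) K g) huK rstK.
Qed.

Lemma rle_pair {C A B : Ob X} (u K : hom C A) (v L : hom C B) :
  u <=r K -> v <=r L -> pair u v <=r pair K L.
Proof.
  rewrite /rle => huK hvL.
  by rewrite rst_pair compA -pair_rstR hvL -pair_rstL huK.
Qed.

Lemma rle_add {A B : Ob X} (u K v L : hom A B) : u <=r K -> v <=r L -> u +m v <=r K +m L.
Proof.
  rewrite /rle => huK hvL; rewrite (rst_add HX).
  transitivity (bar u ;; bar v ;; (u +m v)); last by rewrite -(rst_add HX) rstK.
  rewrite !(comp_add HX); congr (_ +m _).
  - by rewrite (rstC u v) !compA huK rstK.
  - by rewrite !compA hvL rstK.
Qed.

Lemma rle_zero_add {A B : Ob X} (z w K : hom A B) : z <=r zero -> w <=r K -> z +m w <=r K.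
Proof. by move=> hz hw; rewrite -(add0m K); apply: rle_add. Qed.

Lemma rle_zero {C A B : Ob X} (x : hom C A) : x ;; @zero X A B <=r zero.
Proof. rewrite comp_zeroR; exact: rle_rst. Qed.

Lemma rle_pi0 {C A B : Ob X} (s : hom C A) (t : hom C B) : pair s t ;; pi0 <=r s.
Proof. rewrite pair_p0; exact: rle_rst. Qed.

Lemma rle_pi1 {C A B : Ob X} (s : hom C A) (t : hom C B) : pair s t ;; pi1 <=r t.
Proof. rewrite pair_p1; exact: rle_rst. Qed.

Lemma rle_times {C A B A' B' : Ob X} (s : hom C A) (t : hom C B) (f : hom A A') (g : hom B B') :
  pair s t ;; times f g <=r pair (s ;; f) (t ;; g).
Proof.
  rewrite /times pair_comp -!compA.
  by apply: rle_pair; apply: rle_compR; [exact: rle_pi0 | exact: rle_pi1].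
Qed.

Lemma iota0_total (A B : Ob X) : total (iota0 A B).
Proof. by apply: pair_total; [exact: idm_total | exact: zero_tot]. Qed.

Lemma iota0_times_total (A B : Ob X) : total (times (iota0 A B) (idm A)).
Proof. by apply: times_total; [exact: iota0_total | exact: idm_total]. Qed.

Lemma iota0_pi1 (A B : Ob X) : iota0 A B ;; pi1 = zero.
Proof. by rewrite /iota0 pair_p1 rst_idm comp_idl. Qed.

Lemma iota1_pi1 (A B : Ob X) : iota1 A B ;; pi1 = idm B.
Proof. by rewrite /iota1 pair_p1 zero_tot comp_idl. Qed.

Lemma iota0_times_pi1 (A B : Ob X) : times (iota0 A B) (idm A) ;; pi1 = pi1.
Proof.
  by rewrite /times pair_p1 (rst_comp_total _ _ (iota0_total A B)) pi0_tot comp_idl comp_idr.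
Qed.

Lemma comp_iota0 {C A B : Ob X} (a : hom C A) : a ;; iota0 A B = pair a zero.
Proof.
  apply: (rle_eq (K := pair a zero)); first last.
  - by rewrite (rst_comp_total _ _ (iota0_total A B)) rst_pair zero_tot comp_idr.
  - exact: rle_refl.
  - by rewrite /iota0 pair_comp comp_idr; apply: rle_pair; [exact: rle_refl | exact: rle_zero].
Qed.

Lemma pair_iota0_times {C A B : Ob X} (a v : hom C A) :
  pair a v ;; times (iota0 A B) (idm A) = pair (pair a zero) v.
Proof.
  apply: (rle_eq (K := pair (pair a zero) v)); first last.
  - by rewrite (rst_comp_total _ _ (iota0_times_total A B)) !rst_pair zero_tot comp_idr.
  - exact: rle_refl.
  - apply: rle_trans; first exact: rle_times.
    rewrite comp_iota0 comp_idr; exact: rle_refl.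
Qed.

Lemma pair_zero_comp_rle {C A B D : Ob X} (a : hom C A) (h : hom A D) :
  pair a (@zero X C B) ;; pair (pi0 ;; h) pi1 <=r pair (a ;; h) zero.
Proof.
  rewrite pair_comp -compA.
  by apply: rle_pair; [apply: rle_compR; exact: rle_pi0 | exact: rle_pi1].
Qed.

(* The middle-four interchange ex = <pi0 x pi0, pi1 x pi1> of [RD.7], on
   arguments of the shape <<a,v>,<u,0>>. *)
Lemma pair_interchange {C A : Ob X} (a u v : hom C A) :
  pair (pair a v) (pair u (@zero X C A)) ;; pair (times (@pi0 X A A) pi0) (times (@pi1 X A A) pi1)
  = pair (pair a u) (pair v (@zero X C A)).
Proof.
  have tot : total (pair (times (@pi0 X A A) (@pi0 X A A)) (times (@pi1 X A A) (@pi1 X A A))).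
  { by apply: pair_total; apply: times_total; first [exact: pi0_tot | exact: pi1_tot]. }
  apply: (rle_eq (K := pair (pair a u) (pair v (@zero X C A)))); [ | exact: rle_refl | ].
  - rewrite pair_comp.
    by apply: rle_pair; (apply: rle_trans; first exact: rle_times);
      apply: rle_pair; first [exact: rle_pi0 | exact: rle_pi1].
  - by rewrite (rst_comp_total _ _ tot) !rst_pair zero_tot !comp_idr !compA (rstC v u).
Qed.

Section ReverseToForward.
Variable R : RevOp X.
Hypothesis HR : RD_axioms R.

Local Notation RR f := (R _ _ f).
Local Notation DD f := (@D_of_R X R _ _ f).

Lemma D_at {C A B : Ob X} (f : hom A B) (a v : hom C A) :
  pair a v ;; DD f = pair (pair a zero) v ;; RR (RR f) ;; pi1.
Proof. by rewrite /D_of_R -!compA pair_iota0_times. Qed.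

Lemma D_eta {A B : Ob X} (f : hom A B) :
  DD f = pair (pair pi0 zero) pi1 ;; RR (RR f) ;; pi1.
Proof. by rewrite -(comp_idl (DD f)) -pair_id D_at. Qed.

Lemma rst_R {A B : Ob X} (f : hom A B) : bar (RR f) = bar (pi0 ;; f).
Proof. by rewrite (RD8 HR) times_rst_idm. Qed.

Lemma rst_pair_R {C A B : Ob X} (p : hom C A) (q : hom C B) (f : hom A B) :
  bar (pair p q ;; RR f) = bar (p ;; f) ;; bar q.
Proof.
  by rewrite -rst_comp_rst rst_R rst_comp_rst -compA pair_p0 compA rst_rstL rstC.
Qed.

Lemma rst_D {A B : Ob X} (f : hom A B) : bar (DD f) = bar (pi0 ;; f).
Proof.
  rewrite /D_of_R rst_comp_pi1 -rst_comp_rst rst_R rst_comp_rst -compA.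
  by rewrite /times pair_p0 comp_idr pi1_tot comp_idl comp_iota0 rst_pair_R zero_tot comp_idr.
Qed.

Lemma rst_pair_D {C A B : Ob X} (p q : hom C A) (f : hom A B) :
  bar (pair p q ;; DD f) = bar (p ;; f) ;; bar q.
Proof.
  by rewrite -rst_comp_rst rst_D rst_comp_rst -compA pair_p0 compA rst_rstL rstC.
Qed.

Lemma R_idm (A : Ob X) : RR (idm A) = pi1.
Proof.
  have -> : RR (idm A) = RR (bar (idm A)) by rewrite rst_idm.
  by rewrite (RD9 HR) rst_idm /times !comp_idr pair_id comp_idl.
Qed.

Lemma R_iota0 (A B : Ob X) : RR (iota0 A B) = pi1 ;; pi0.
Proof.
  rewrite /iota0 (RD4 HR) R_idm (RD1_zero HR) comp_zeroR.
  rewrite (times_total _ _ (idm_total A) pi1_tot) comp_idl (add_zero HX).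
  by rewrite /times pair_p1 comp_idr pi0_tot comp_idl.
Qed.

Lemma R_iota1 (A B : Ob X) : RR (iota1 A B) = pi1 ;; pi1.
Proof.
  rewrite /iota1 (RD4 HR) R_idm (RD1_zero HR) comp_zeroR.
  rewrite (times_total _ _ (idm_total B) pi0_tot) comp_idl add0m.
  by rewrite /times pair_p1 comp_idr pi0_tot comp_idl.
Qed.

Lemma R_comp_rle {C A B D : Ob X} (h : hom A B) (k : hom B D) (s : hom C A) (t : hom C D) :
  pair s t ;; RR (h ;; k) <=r pair s (pair (s ;; h) t ;; RR k) ;; RR h.
Proof.
  rewrite (RD5 HR) -compA; apply: rle_compR; rewrite pair_comp.
  apply: rle_pair; first exact: rle_pi0.
  rewrite -compA; apply: rle_compR; rewrite pair_comp.
  apply: rle_pair; last exact: rle_pi1.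
  rewrite -compA; apply: rle_compR; exact: rle_pi0.
Qed.

Lemma R_at_zero_rle {C A B : Ob X} (g : hom A B) (s : hom C A) : pair s zero ;; RR g <=r zero.
Proof. rewrite (RD2_zero HR); exact: rle_rst. Qed.

Lemma R_pi0_comp_rle {A B D : Ob X} (h : hom A D) : RR (@pi0 X A B ;; h) ;; pi1 <=r zero.
Proof. rewrite (RD5 HR) (RD3_0 HR) !compA iota0_pi1 -!compA; exact: rle_zero. Qed.

Lemma R_pair_pi0_rle {C A B D E : Ob X} (h : hom A D) (k : hom (prod A B) E)
    (s : hom C (prod A B)) (t : hom C (prod D E)) :
  pair s t ;; RR (pair (pi0 ;; h) k) ;; pi1 <=r pair s (t ;; pi1) ;; RR k ;; pi1.
Proof.
  rewrite (RD4 HR) (comp_add HX) (add_pi1 HX); apply: rle_zero_add.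
  - rewrite !compA; apply: rle_trans; first (do 2 apply: rle_compL; exact: R_pi0_comp_rle).
    rewrite -compA; exact: rle_zero.
  - rewrite -compA; do 2 apply: rle_compR.
    by apply: rle_trans; first exact: rle_times; rewrite comp_idr; exact: rle_refl.
Qed.

Lemma D_zero (A B : Ob X) : DD (@zero X A B) = zero.
Proof.
  by rewrite /D_of_R !(RD1_zero HR) compA (zero_pi1 HX) comp_zeroR (iota0_times_total A B) comp_idl.
Qed.

Lemma D_add (A B : Ob X) (f g : hom A B) : DD (f +m g) = DD f +m DD g.
Proof. by rewrite /D_of_R !(RD1_add HR) (comp_add HX) (add_pi1 HX). Qed.

Lemma D_linear_add (C A B : Ob X) (f : hom A B) (a v w : hom C A) :
  pair a (v +m w) ;; DD f = (pair a v ;; DD f) +m (pair a w ;; DD f).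
Proof. by rewrite !D_at (RD2_add HR) (add_pi1 HX). Qed.

Lemma D_linear_zero (C A B : Ob X) (f : hom A B) (a : hom C A) :
  pair a zero ;; DD f = bar (a ;; f) ;; (@zero X C B).
Proof. by rewrite D_at (RD2_zero HR) compA (zero_pi1 HX) rst_pair_R zero_tot comp_idr. Qed.

Lemma D_idm (A : Ob X) : DD (idm A) = pi1.
Proof. by rewrite /D_of_R R_idm (RD3_1 HR) !compA iota1_pi1 comp_idr iota0_times_pi1. Qed.

Lemma D_pi0 (A B : Ob X) : DD (@pi0 X A B) = pi1 ;; pi0.
Proof.
  rewrite /D_of_R (RD3_0 HR) (RD5 HR) (RD3_1 HR) R_iota0 !compA iota1_pi1 comp_idr.
  rewrite pair_p1 pi0_tot comp_idl -(compA (pair _ _) pi1 pi0) pair_p1 rst_comp_pi1.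
  by rewrite pi0_tot comp_idl -compA iota0_times_pi1.
Qed.

Lemma D_pi1 (A B : Ob X) : DD (@pi1 X A B) = pi1 ;; pi1.
Proof.
  rewrite /D_of_R (RD3_1 HR) (RD5 HR) (RD3_1 HR) R_iota1 !compA iota1_pi1 comp_idr.
  rewrite pair_p1 pi0_tot comp_idl -(compA (pair _ _) pi1 pi1) pair_p1 rst_comp_pi1.
  by rewrite pi0_tot comp_idl -compA iota0_times_pi1.
Qed.

Lemma D_rst (A B : Ob X) (f : hom A B) : bar (DD f) = times (bar f) (idm A).
Proof. by rewrite rst_D times_rst_idm. Qed.

(* The chain rule, as an inequality: unfold R[R[f g]] with [RD.5] twice and
   [RD.4] twice, discarding the summands killed by pi0-factoring maps. *)
Lemma D_comp_rle (A B C : Ob X) (f : hom A B) (g : hom B C) :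
  DD (f ;; g) <=r pair (pi0 ;; f) (DD f) ;; DD g.
Proof.
  set P := pair (@pi0 X A A) (@zero X _ C).
  set m := pair (pi0 ;; f) pi1 ;; RR g.
  have P_m : P ;; pair pi0 m <=r pair pi0 zero.
  { rewrite /P pair_comp; apply: rle_pair; first exact: rle_pi0.
    rewrite /m -compA; apply: rle_trans; last exact: (R_at_zero_rle g (pi0 ;; f)).
    apply: rle_compR; exact: pair_zero_comp_rle. }
  rewrite D_eta (RD5 HR f g) -/m -/P.
  apply: rle_trans; first (apply: rle_compR; exact: R_comp_rle).
  apply: (rle_trans (w := pair P (pair (pair pi0 zero) pi1 ;; RR (RR f)) ;; RR (pair pi0 m) ;; pi1)).
  { do 2 apply: rle_compR; apply: rle_pair; first exact: rle_refl.
    by apply: rle_compR; apply: rle_pair; [exact: P_m | exact: rle_refl]. }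
  have R_pair := R_pair_pi0_rle (idm A) m P (pair (pair pi0 zero) pi1 ;; RR (RR f)).
  rewrite comp_idr in R_pair; apply: (rle_trans R_pair).
  rewrite -D_eta /m.
  apply: rle_trans; first (apply: rle_compR; exact: R_comp_rle).
  apply: (rle_trans (w := pair P (pair (pair (pi0 ;; f) zero) (DD f) ;; RR (RR g))
                          ;; RR (pair (pi0 ;; f) pi1) ;; pi1)).
  { do 2 apply: rle_compR; apply: rle_pair; first exact: rle_refl.
    by apply: rle_compR; apply: rle_pair; [exact: pair_zero_comp_rle | exact: rle_refl]. }
  apply: rle_trans; first exact: R_pair_pi0_rle.
  rewrite (RD3_1 HR) !compA iota1_pi1 comp_idr -compA -D_at.
  exact: rle_pi1.
Qed.

Lemma D_comp (A B C : Ob X) (f : hom A B) (g : hom B C) :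
  DD (f ;; g) = pair (pi0 ;; f) (DD f) ;; DD g.
Proof.
  apply: (rle_eq (K := pair (pi0 ;; f) (DD f) ;; DD g)); [exact: D_comp_rle | exact: rle_refl | ].
  by rewrite rst_D rst_pair_D rst_D -compA rst_compL.
Qed.

Lemma D_rst_idem (A B : Ob X) (f : hom A B) : DD (bar f) = times (bar f) (idm A) ;; pi1.
Proof.
  apply: (rle_eq (K := pi1));
    [ | by rewrite times_rst_idm; exact: rle_rst
      | by rewrite rst_D rst_comp_pi1 times_rst_idm rst_rst rst_comp_rst].
  rewrite /D_of_R (RD9 HR) times_rst_idm (RD5 HR) (RD9 HR) times_rst_idm !compA.
  apply: (rle_trans (w := times (iota0 A A) (idm A) ;; pi1));
    last by rewrite iota0_times_pi1; exact: rle_refl.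
  apply: rle_compL; apply: rle_trans; first (apply: rle_compL; exact: rle_rst).
  rewrite -compA; apply: rle_trans; first (apply: rle_compR; exact: rle_pi1).
  rewrite (RD3_1 HR) !compA iota1_pi1 comp_idr; exact: rle_pi1.
Qed.

Lemma D_rst_comp {E A B : Ob X} (e : hom A E) (f : hom A B) :
  DD (bar e ;; f) = bar (DD e) ;; DD f.
Proof.
  apply: (rle_eq (K := DD f)); [ | exact: rle_rst | ].
  - rewrite D_comp -{2}(comp_idl (DD f)) -pair_id; apply: rle_compR.
    apply: rle_pair; first by rewrite comp_rstR; exact: rle_rst.
    rewrite D_rst_idem times_rst_idm; exact: rle_rst.
  - by rewrite rst_rstL !rst_D -compA comp_rstR compA rst_rstL.
Qed.

Lemma D_comp_pi0 {C A B : Ob X} (h : hom C (prod A B)) : DD (h ;; pi0) = DD h ;; pi0.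
Proof.
  apply: (rle_eq (K := DD h ;; pi0)); [ | exact: rle_refl | ].
  - rewrite D_comp D_pi0 -compA; apply: rle_compR; exact: rle_pi1.
  - by rewrite rst_D rst_comp_pi0 rst_D -compA rst_comp_pi0.
Qed.

Lemma D_comp_pi1 {C A B : Ob X} (h : hom C (prod A B)) : DD (h ;; pi1) = DD h ;; pi1.
Proof.
  apply: (rle_eq (K := DD h ;; pi1)); [ | exact: rle_refl | ].
  - rewrite D_comp D_pi1 -compA; apply: rle_compR; exact: rle_pi1.
  - by rewrite rst_D rst_comp_pi1 rst_D -compA rst_comp_pi1.
Qed.

Lemma D_pair (C A B : Ob X) (f : hom C A) (g : hom C B) :
  DD (pair f g) = pair (DD f) (DD g).
Proof.
  by apply: (pair_unique HX); rewrite -?D_comp_pi0 -?D_comp_pi1 ?pair_p0 ?pair_p1 D_rst_comp.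
Qed.

(* D[iota0 x 1] is pointwise below pi1 (iota0 x 1): the injection is linear. *)
Lemma D_iota0_times_rle (A B : Ob X) :
  DD (times (iota0 A B) (idm A)) <=r pi1 ;; times (iota0 A B) (idm A).
Proof.
  have D_iota0 : DD (iota0 A B) = pi1 ;; iota0 A B.
  { by rewrite {1}/iota0 D_pair D_idm D_zero comp_iota0. }
  rewrite {1}/times D_pair /times pair_comp; apply: rle_pair.
  - rewrite D_comp D_pi0 D_iota0 -compA -(compA pi1 pi0); apply: rle_compR; exact: rle_pi1.
  - rewrite !comp_idr D_pi1; exact: rle_refl.
Qed.

(* [RD.6] in pointwise form: differentiating R[g] in its linear argument. *)
Lemma D_R_linear_rle {C A B : Ob X} (g : hom A B) (s : hom C A) (t u : hom C B) :
  pair (pair s t) (pair zero u) ;; DD (RR g) <=r pair s u ;; RR g.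
Proof.
  set sh := pair (times (idm A) (@pi0 X B B)) (times (@zero X A A) (@pi1 X B B)).
  have tot : total sh.
  { apply: pair_total; apply: times_total;
      first [exact: idm_total | exact: zero_tot | exact: pi0_tot | exact: pi1_tot]. }
  have sh_at : pair s (pair t u) ;; sh = pair (pair s t) (pair zero u).
  { apply: (rle_eq (K := pair (pair s t) (pair zero u))); [ | exact: rle_refl
      | by rewrite (rst_comp_total _ _ tot) !rst_pair zero_tot comp_idl compA].
    rewrite pair_comp; apply: rle_pair; (apply: rle_trans; first exact: rle_times);
      apply: rle_pair; rewrite ?comp_idr; first [exact: rle_refl | exact: rle_pi0 | exact: rle_zero | exact: rle_pi1]. }
  have rd6 := RD6 HR g; rewrite -/sh !compA in rd6.
  rewrite -sh_at /D_of_R !compA rd6 -compA; apply: rle_compR.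
  apply: rle_trans; first exact: rle_times.
  by apply: rle_pair; [rewrite comp_idr; exact: rle_refl | exact: rle_pi1].
Qed.

Lemma D_D_linear (C A B : Ob X) (f : hom A B) (a v w : hom C A) :
  pair (pair a v) (pair zero w) ;; DD (DD f) = bar v ;; pair a w ;; DD f.
Proof.
  apply: (rle_eq (K := pair a w ;; DD f)); [ | by rewrite compA; exact: rle_rst | ]; last first.
  { rewrite !rst_pair_D rst_pair zero_tot comp_idl (compA (bar v)) rst_rstL rst_pair_D.
    by rewrite -compA (rstC v (a ;; f)). }
  set q := pair (pair a v) (pair zero w).
  rewrite {2}/D_of_R !D_comp D_pi1 -(compA q) -(compA (q ;; _)).
  apply: rle_trans; first (apply: rle_compR; rewrite pair_comp; exact: rle_pi1).
  rewrite -(compA q) pair_comp.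
  apply: (rle_trans (w := pair (pair (pair a zero) v) (pair zero w) ;; DD (RR (RR f)) ;; pi1)).
  { do 2 apply: rle_compR; apply: rle_pair.
    - rewrite -compA; apply: rle_trans; first (apply: rle_compR; exact: rle_pi0).
      rewrite pair_iota0_times; exact: rle_refl.
    - apply: rle_trans; first (apply: rle_compL; exact: D_iota0_times_rle).
      rewrite -compA; apply: rle_trans; first (apply: rle_compR; exact: rle_pi1).
      rewrite pair_iota0_times pair_zero; exact: rle_refl. }
  apply: rle_trans; first (apply: rle_compR; exact: D_R_linear_rle).
  rewrite -D_at; exact: rle_refl.
Qed.

Lemma D_D_symmetric (C A B : Ob X) (f : hom A B) (a u v : hom C A) :
  pair (pair a v) (pair u zero) ;; DD (DD f) = pair (pair a u) (pair v zero) ;; DD (DD f).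
Proof.
  have rd7 : DD (DD f) = pair (times (@pi0 X A A) pi0) (times (@pi1 X A A) pi1) ;; DD (DD f).
  { have h := RD7 HR f; simpl in h; rewrite /D_of_R; rewrite !compA in h *; exact: h. }
  by rewrite {1}rd7 -compA pair_interchange.
Qed.

Lemma D_of_R_axioms : DR_axioms (D_of_R R).
Proof.
  split; [exact: D_zero | exact: D_add | exact: D_linear_add | exact: D_linear_zero
         | exact: D_idm | exact: D_pi0 | exact: D_pi1 | exact: D_pair | exact: D_comp
         | exact: D_D_linear | exact: D_D_symmetric | exact: D_rst | exact: D_rst_idem].
Qed.

End ReverseToForward.
End CartesianLeftAdditive.

Theorem mainTheorem1 (X : ClData) (R : RevOp X) :
  is_RDRC R -> is_DRC (D_of_R R).
Proof. by move=> [HX HR]; split; [exact: HX | exact: D_of_R_axioms]. Qed.
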